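(* Let $p,q$ be squarefree positive integers such that $K=\mathbb{Q}(\sqrt p,\sqrt q)$ has degree $4$ over $\mathbb{Q}$, and let $r=\frac{pq}{\gcd(p,q)^2}$. Suppose that $\alpha=a+b\sqrt p+c\sqrt q+d\sqrt r$ (with $a,b,c,d\in\mathbb{Q}$) is a totally positive element of the ring of integers $\mathcal{O}_K$, and let $\mathrm{Tr}$ denote the trace from $K$ to $\mathbb{Q}$. Then: (1) if $b\neq 0$, then $\mathrm{Tr}(\alpha)>\sqrt p$; (2) if $c\neq 0$, then $\mathrm{Tr}(\alpha)>\sqrt q$; (3) if $d\neq 0$, then $\mathrm{Tr}(\alpha)>\sqrt r$. Finally, if $\alpha\notin\mathbb{Z}$, then $\mathrm{Tr}(\alpha)>\min(\sqrt p,\sqrt q,\sqrt r)$.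
   Context: An element of $K$ is totally positive if all of its images under the four real embeddings of $K$ are positive. *)

From mathcomp Require Import all_boot all_order all_algebra.
From mathcomp Require Import all_field.
Set Implicit Arguments. Unset Strict Implicit. Unset Printing Implicit Defensive.
Import Order.TTheory GRing.Theory Num.Theory.
Local Open Scope ring_scope.

Definition squarefree (n : nat) : Prop :=
  forall k : nat, (1 < k)%N -> ~~ (k * k %| n)%N.

Definition rpart (p q : nat) : nat := (p * q %/ (gcdn p q ^ 2))%N.

(* K = Q(sqrt p, sqrt q) is realised inside algC via sqrtC.
   The elements 1, sqrt p, sqrt q, sqrt r span K over Q; [K:Q] = 4 means
   that they are Q-linearly independent. *)
Definition degree4 (p q : nat) : Prop :=
  forall a b c d : rat,
    ratr a + ratr b * sqrtC p%:R + ratr c * sqrtC q%:R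
      + ratr d * sqrtC (rpart p q)%:R = 0 :> algC ->
    [/\ a = 0, b = 0, c = 0 & d = 0].

(* The image of alpha = a + b sqrt p + c sqrt q + d sqrt r under the real
   embedding sending sqrt p to s*sqrt p and sqrt q to t*sqrt q (s,t = +-1);
   since sqrt r = sqrt p * sqrt q / gcd(p,q), sqrt r goes to s*t*sqrt r. *)
Definition emb (p q : nat) (a b c d : rat) (s t : bool) : algC :=
  let sg (x : bool) : algC := if x then 1 else -1 in
  ratr a + sg s * ratr b * sqrtC p%:R + sg t * ratr c * sqrtC q%:R
    + sg s * sg t * ratr d * sqrtC (rpart p q)%:R.

Definition alphaC (p q : nat) (a b c d : rat) : algC := emb p q a b c d true true.

Definition totally_positive (p q : nat) (a b c d : rat) : Prop :=
  forall s t : bool, 0 < emb p q a b c d s t.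

Definition trK (p q : nat) (a b c d : rat) : algC :=
  emb p q a b c d true true + emb p q a b c d true false
  + emb p q a b c d false true + emb p q a b c d false false.

From mathcomp Require Import all_boot all_order all_algebra all_field.
From mathcomp Require Import ring zify.
Import Order.TTheory GRing.Theory Num.Theory.
Local Open Scope ring_scope.

(* Each of the four images of alpha is a root of its minimal polynomial,
   because the sign changes of sqrt p and sqrt q respect the multiplication of
   coordinates on the basis 1, sqrt p, sqrt q, sqrt r, which [degree4] makes
   unique.  Hence all conjugates of alpha are positive algebraic integers.
   Grouping them in two pairs with sums x, y gives x + y = Tr alpha and
   x - y = 4b sqrt p (resp. 4c sqrt q, 4d sqrt r, where r is again
   squarefree).  As x - y is an algebraic integer, (4b)^2 p is a rational
   algebraic integer, hence an integer, and since p is squarefree 4b is an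
   integer; so for b <> 0, sqrt p <= |x - y| < x + y = Tr alpha.  Finally, if
   b = c = d = 0 then alpha is a rational algebraic integer, i.e. in Z. *)

Lemma squarefreeP n : squarefree n <-> forall l, prime l -> ~~ (l * l %| n)%N.
Proof.
split=> [sf l /prime_gt1 | sfp k k_gt1]; first exact: sf.
apply: contra (sfp _ (pdiv_prime k_gt1)); apply: dvdn_trans.
exact: dvdn_mul (pdiv_dvd k) (pdiv_dvd k).
Qed.

Lemma squarefree_dvd d n : (d %| n)%N -> squarefree n -> squarefree d.
Proof. by move=> dn sf k /sf; apply: contra => /dvdn_trans->. Qed.

Lemma squarefreeM m n :
  coprime m n -> squarefree m -> squarefree n -> squarefree (m * n).
Proof.
move=> co /squarefreeP sm /squarefreeP sn; apply/squarefreeP => l pl.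
apply/negP => ll_mn.
have : (l %| m * n)%N by apply: dvdn_trans ll_mn; apply: dvdn_mulr.
rewrite Euclid_dvdM // => /orP[lm | ln].
- have co_ll : coprime (l * l) n.
    by rewrite coprimeMl andbb (coprime_dvdl lm co).
  by move: ll_mn; rewrite Gauss_dvdl // => ll_m; case/negP: (sm l pl).
- have co_ll : coprime (l * l) m.
    by rewrite coprimeMl andbb (coprime_dvdl ln) // coprime_sym.
  by move: ll_mn; rewrite mulnC Gauss_dvdl // => ll_n; case/negP: (sn l pl).
Qed.

Lemma rpartE p q : rpart p q = (p %/ gcdn p q * (q %/ gcdn p q))%N.
Proof.
rewrite /rpart expnS expn1 divnMA -divn_mulAC ?dvdn_gcdl //.
by rewrite muln_divA ?dvdn_gcdr.
Qed.

Lemma rpart_mul_gcd p q : (rpart p q * gcdn p q ^ 2 = p * q)%N.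
Proof.
by rewrite rpartE expnS expn1 mulnACA !divnK ?dvdn_gcdl ?dvdn_gcdr.
Qed.

Lemma coprime_div_gcd p q : (0 < gcdn p q)%N ->
  coprime (p %/ gcdn p q) (q %/ gcdn p q).
Proof.
move=> g_gt0; rewrite /coprime -(eqn_pmul2r g_gt0) mul1n muln_gcdl.
by rewrite !divnK ?dvdn_gcdl ?dvdn_gcdr.
Qed.

Lemma squarefree_rpart {p q : nat} : (0 < p)%N ->
  squarefree p -> squarefree q -> squarefree (rpart p q).
Proof.
move=> p_gt0 sp sq; rewrite rpartE.
apply: squarefreeM; first by rewrite coprime_div_gcd // gcdn_gt0 p_gt0.
- exact: squarefree_dvd (dvdn_div (dvdn_gcdl p q)) sp.
- exact: squarefree_dvd (dvdn_div (dvdn_gcdr p q)) sq.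
Qed.

Lemma sqrtC_rpart p q : (0 < p)%N ->
  sqrtC (rpart p q)%:R = sqrtC p%:R * sqrtC q%:R / (gcdn p q)%:R :> algC.
Proof.
move=> p_gt0; have g_neq0 : (gcdn p q)%:R != 0 :> algC.
  by rewrite pnatr_eq0 -lt0n gcdn_gt0 p_gt0.
apply: (mulIf g_neq0); rewrite divfK // -sqrtCM ?nnegrE ?ler0n //.
rewrite -natrM -rpart_mul_gcd natrM natrX sqrtCM ?nnegrE ?exprn_ge0 ?ler0n //.
by rewrite sqrCK ?ler0n.
Qed.

Record biquad := Biquad { bq0 : rat; bq1 : rat; bq2 : rat; bq3 : rat }.

Section BiquadraticArithmetic.

Variables (p q : nat).
Hypothesis p_gt0 : (0 < p)%N.

Definition bq_emb (s t : bool) (u : biquad) : algC :=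
  emb p q (bq0 u) (bq1 u) (bq2 u) (bq3 u) s t.

Definition bq_const (x : rat) : biquad := Biquad x 0 0 0.

Definition bq_add (u v : biquad) : biquad :=
  Biquad (bq0 u + bq0 v) (bq1 u + bq1 v) (bq2 u + bq2 v) (bq3 u + bq3 v).

(* With g = gcd(p, q): sqrt p sqrt q = g sqrt r, sqrt q sqrt r = (q/g) sqrt p,
   sqrt p sqrt r = (p/g) sqrt q and r = pq/g^2. *)
Definition bq_mul (u v : biquad) : biquad :=
  let g := (gcdn p q)%:R in
  Biquad (bq0 u * bq0 v + p%:R * bq1 u * bq1 v + q%:R * bq2 u * bq2 v
            + (rpart p q)%:R * bq3 u * bq3 v)
         (bq0 u * bq1 v + bq1 u * bq0 v
            + q%:R / g * (bq2 u * bq3 v + bq3 u * bq2 v))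
         (bq0 u * bq2 v + bq2 u * bq0 v
            + p%:R / g * (bq1 u * bq3 v + bq3 u * bq1 v))
         (bq0 u * bq3 v + bq3 u * bq0 v
            + g * (bq1 u * bq2 v + bq2 u * bq1 v)).

Definition bq_horner (P : {poly rat}) (u : biquad) : biquad :=
  foldr (fun c v => bq_add (bq_mul v u) (bq_const c)) (bq_const 0) P.

Lemma bq_emb_const s t x : bq_emb s t (bq_const x) = ratr x.
Proof. by case: s; case: t; rewrite /bq_emb /emb /= !rmorph0; ring. Qed.

Lemma bq_embD s t u v : bq_emb s t (bq_add u v) = bq_emb s t u + bq_emb s t v.
Proof. by case: s; case: t; rewrite /bq_emb /emb /= !rmorphD; ring. Qed.

Lemma bq_embM s t u v : bq_emb s t (bq_mul u v) = bq_emb s t u * bq_emb s t v.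
Proof.
have g_neq0 : (gcdn p q)%:R != 0 :> algC.
  by rewrite pnatr_eq0 -lt0n gcdn_gt0 p_gt0.
case: u v => [x0 x1 x2 x3] [y0 y1 y2 y3].
rewrite /bq_emb /emb /= !(rmorphD, rmorphM, fmorphV) /= !ratr_nat.
have rE : (rpart p q)%:R
          = (sqrtC p%:R * sqrtC q%:R / (gcdn p q)%:R) ^+ 2 :> algC.
  by rewrite -sqrtC_rpart // sqrtCK.
rewrite sqrtC_rpart // rE.
set P := sqrtC p%:R; set Q := sqrtC q%:R.
rewrite -[p%:R]sqrtCK -[q%:R]sqrtCK -/P -/Q.
by case: s; case: t => /=; field.
Qed.

Lemma bq_emb_horner s t P u :
  bq_emb s t (bq_horner P u) = (map_poly ratr P).[bq_emb s t u].
Proof.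
rewrite map_polyE horner_Poly /bq_horner.
elim: (polyseq P) => [|c l IH] /=; first by rewrite bq_emb_const rmorph0.
by rewrite bq_embD bq_embM bq_emb_const IH.
Qed.

Hypothesis deg4 : degree4 p q.

Lemma bq_emb_eq0 u s t : bq_emb true true u = 0 -> bq_emb s t u = 0.
Proof.
case: u => x0 x1 x2 x3; rewrite /bq_emb /emb /= !mul1r => /deg4[-> -> -> ->].
by rewrite !rmorph0 !(mulr0, mul0r, addr0).
Qed.

Lemma bq_root_conj P u s t :
  root (map_poly ratr P) (bq_emb true true u) ->
  root (map_poly ratr P) (bq_emb s t u).
Proof. by rewrite /root -!bq_emb_horner => /eqP/bq_emb_eq0->. Qed.

End BiquadraticArithmetic.

Lemma emb_Aint p q a b c d s t : (0 < p)%N -> degree4 p q ->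
  alphaC p q a b c d \in Aint -> emb p q a b c d s t \in Aint.
Proof.
move=> p_gt0 deg4 alphaZ.
have [P [minP _] _] := minCpolyP (alphaC p q a b c d).
have root_alpha : root (map_poly ratr P) (alphaC p q a b c d).
  by rewrite -minP root_minCpoly.
apply: root_monic_Aint (minCpoly_monic _) alphaZ.
rewrite minP.
exact: (bq_root_conj p q p_gt0 deg4 _ (Biquad a b c d) s t root_alpha).
Qed.

Lemma squarefree_sqrM_int {n : nat} {x : rat} :
  squarefree n -> x ^+ 2 * n%:R \in Num.int -> x \in Num.int.
Proof.
move=> sf /intrP[k xnk]; rewrite Qint_def.
have kden : k * denq x ^+ 2 = numq x ^+ 2 * n%:Z.
  by apply: (@intr_inj rat); rewrite !rmorphM /= numqE -xnk; ring.
have den_dvd : (`|denq x| * `|denq x| %| n)%N.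
  have : (`|denq x| ^ 2 %| `|numq x| ^ 2 * n)%N.
    apply/dvdnP; exists `|k|%N.
    by have := congr1 absz kden; rewrite !abszM -!mulnn.
  rewrite Gauss_dvdr ?mulnn // coprimeXl // coprimeXr //.
  by rewrite coprime_sym coprime_num_den.
have := contraL (@sf _) den_dvd; have := denq_gt0 x; lia.
Qed.

Lemma sqrtC_lt_add_Aint {n : nat} {f : rat} {x y : algC} :
  squarefree n -> f != 0 -> x \in Aint -> y \in Aint -> 0 < x -> 0 < y ->
  x - y = ratr f * sqrtC n%:R -> sqrtC n%:R < x + y.
Proof.
move=> sf f_neq0 xZ yZ x_gt0 y_gt0 xy.
have f2nZ : ratr (f ^+ 2 * n%:R) \in Aint.
  rewrite rmorphM rmorphXn /= ratr_nat -[n%:R]sqrtCK -exprMn -xy.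
  by rewrite rpredX ?rpredB.
have fZ : (ratr f : algC) \in Num.int.
  rewrite Cint_rat (squarefree_sqrM_int sf) //.
  by rewrite -Cint_rat Cint_rat_Aint ?Crat_rat.
have f_ge1 : 1 <= `|ratr f| :> algC by rewrite norm_intr_ge1 ?fmorph_eq0.
have xy_lt : `|x - y| < x + y.
  rewrite real_ltr_distl ?rpredB ?gtr0_real //.
  rewrite [x + y]addrC opprD addrA subrr add0r gtrN //=.
  by rewrite ltr_pwDl // lerDr ltW.
have n_ge0 : 0 <= sqrtC n%:R :> algC by rewrite sqrtC_ge0 ler0n.
apply: le_lt_trans xy_lt; rewrite xy normrM (ger0_norm n_ge0).
exact: ler_peMl n_ge0 f_ge1.
Qed.

Lemma real_min3_lt (R : numDomainType) (u v w z : R) :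
  u \is Num.real -> v \is Num.real -> w \is Num.real ->
  [|| u < z, v < z | w < z] -> Num.min u (Num.min v w) < z.
Proof.
by move=> ur vr wr; rewrite !comparable_gt_min ?real_comparable ?min_real.
Qed.

Section TraceBounds.

Variables (p q : nat) (a b c d : rat).
Hypotheses (p_gt0 : (0 < p)%N) (deg4 : degree4 p q).
Hypotheses (alphaZ : alphaC p q a b c d \in Aint)
           (alpha_tpos : totally_positive p q a b c d).

Local Notation e := (emb p q a b c d).

Lemma sqrtC_lt_trK_split n f s1 t1 s2 t2 s3 t3 s4 t4 :
  squarefree n -> f != 0 ->
  (e s1 t1 + e s2 t2) - (e s3 t3 + e s4 t4) = 4%:R * ratr f * sqrtC n%:R ->
  (e s1 t1 + e s2 t2) + (e s3 t3 + e s4 t4) = trK p q a b c d ->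
  sqrtC n%:R < trK p q a b c d.
Proof.
move=> sf f_neq0 diff <-.
have sumZ s t s' t' : e s t + e s' t' \in Aint.
  by apply: rpredD; apply: emb_Aint.
have sum_gt0 s t s' t' : 0 < e s t + e s' t'.
  by apply: addr_gt0; apply: alpha_tpos.
have f4_neq0 : 4%:R * f != 0 by rewrite mulf_neq0 ?pnatr_eq0.
apply: (sqrtC_lt_add_Aint sf f4_neq0 (sumZ _ _ _ _) (sumZ _ _ _ _));
  rewrite ?sum_gt0 //.
by rewrite diff rmorphM rmorph_nat.
Qed.

Lemma sqrtC_p_lt_trK : squarefree p -> b != 0 -> sqrtC p%:R < trK p q a b c d.
Proof.
move=> sp b_neq0.
apply: (sqrtC_lt_trK_split p b true true true false false true false false
          sp b_neq0);
  by rewrite /trK /emb /=; ring.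
Qed.

Lemma sqrtC_q_lt_trK : squarefree q -> c != 0 -> sqrtC q%:R < trK p q a b c d.
Proof.
move=> sq c_neq0.
apply: (sqrtC_lt_trK_split q c true true false true true false false false
          sq c_neq0);
  by rewrite /trK /emb /=; ring.
Qed.

Lemma sqrtC_rpart_lt_trK : squarefree p -> squarefree q -> d != 0 ->
  sqrtC (rpart p q)%:R < trK p q a b c d.
Proof.
move=> sp sq d_neq0.
have sr := squarefree_rpart p_gt0 sp sq.
apply: (sqrtC_lt_trK_split _ d true true false false true false false true
          sr d_neq0);
  by rewrite /trK /emb /=; ring.
Qed.

Lemma min_sqrtC_lt_trK : squarefree p -> squarefree q ->
  alphaC p q a b c d \notin Num.int ->
  Num.min (sqrtC p%:R) (Num.min (sqrtC q%:R) (sqrtC (rpart p q)%:R))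
    < trK p q a b c d.
Proof.
move=> sp sq alpha_nZ.
have sqrtC_real n : sqrtC n%:R \is @Num.real algC.
  by rewrite ger0_real ?sqrtC_ge0.
apply: real_min3_lt => //.
have [b0 | /(sqrtC_p_lt_trK sp)-> //] := eqVneq b 0.
have [c0 | /(sqrtC_q_lt_trK sq)->] := eqVneq c 0; last by rewrite orbT.
have [d0 | /(sqrtC_rpart_lt_trK sp sq)->] := eqVneq d 0; last by rewrite !orbT.
have alphaE : alphaC p q a b c d = ratr a.
  by rewrite /alphaC /emb b0 c0 d0 !rmorph0 !(mulr0, mul0r, addr0).
by case/negP: alpha_nZ; rewrite alphaE Cint_rat_Aint ?Crat_rat // -alphaE.
Qed.

End TraceBounds.

Theorem lemma3 (p q : nat) (a b c d : rat) :
  (0 < p)%N -> (0 < q)%N -> squarefree p -> squarefree q -> degree4 p q ->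
  alphaC p q a b c d \in Aint ->
  totally_positive p q a b c d ->
  [/\ (b != 0 -> sqrtC p%:R < trK p q a b c d),
      (c != 0 -> sqrtC q%:R < trK p q a b c d),
      (d != 0 -> sqrtC (rpart p q)%:R < trK p q a b c d) &
      (alphaC p q a b c d \notin Num.int ->
         Num.min (sqrtC p%:R) (Num.min (sqrtC q%:R) (sqrtC (rpart p q)%:R))
           < trK p q a b c d)].
Proof.
move=> p_gt0 _ sp sq deg4 alphaZ alpha_tpos; split.
- exact: sqrtC_p_lt_trK.
- exact: sqrtC_q_lt_trK.
- exact: sqrtC_rpart_lt_trK.
- exact: min_sqrtC_lt_trK.
Qed.
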